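(* Let $d\ge2$, $1\le m<d$, $\delta\in(0,1)$, let $f=(f_1,\dots,f_L):\mathbb{R}^d\to\mathbb{R}^L$ be a classifier, $\boldsymbol{x}_0\in\mathbb{R}^d$ with label $\hat k$ and $\|\boldsymbol{r}^*\|_2<\infty$, let $\mathcal S$ be a random $m$-dimensional subspace, and let $0\le l\le u$, $t\ge0$. Let $p\in\arg\min_{i\neq\hat k}\|\boldsymbol{r}^i\|_2$ and define the (deterministic) set $$A=\Big\{k\neq\hat k:\ \|\boldsymbol{r}^k\|_2\ge1.45\sqrt{\zeta_2(m,\delta)}\sqrt{\tfrac dm}\,\|\boldsymbol{r}^*\|_2\Big\}.$$ Assume that for every $k\ne\hat k$ with $k\notin A$, $\mathbb{P}\big(l\le\|\boldsymbol{r}^k_{\mathcal S}\|_2/\|\boldsymbol{r}^k\|_2\le u\big)\ge1-\delta$, and that $\mathbb{P}\big(\|\boldsymbol{r}^p_{\mathcal S}\|_2\ge1.45\sqrt{\zeta_2(m,\delta)}\sqrt{\tfrac dm}\,\|\boldsymbol{r}^*\|_2\big)\le t$. Then $$\mathbb{P}\Big(l\le\frac{\|\boldsymbol{r}^*_{\mathcal S}\|_2}{\|\boldsymbol{r}^*\|_2}\le u\Big)\ge1-(L+1)\delta-t.$$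
   Context: For an $L$-class classifier $f=(f_1,\dots,f_L):\mathbb{R}^d\to\mathbb{R}^L$ and a point $\boldsymbol{x}_0$ with estimated label $\hat k=\arg\max_k f_k(\boldsymbol{x}_0)$, and for a linear subspace $\mathcal{S}\subseteq\mathbb{R}^d$ and $k\neq\hat k$, define $\|\boldsymbol{r}^k_{\mathcal S}\|_2=\inf\{\|\boldsymbol{r}\|_2:\boldsymbol{r}\in\mathcal{S},\ f_k(\boldsymbol{x}_0+\boldsymbol{r})\ge f_{\hat k}(\boldsymbol{x}_0+\boldsymbol{r})\}$ (with $\inf\emptyset=+\infty$), $\|\boldsymbol{r}^k\|_2:=\|\boldsymbol{r}^k_{\mathbb{R}^d}\|_2$, $\|\boldsymbol{r}^*_{\mathcal S}\|_2=\min_{k\neq\hat k}\|\boldsymbol{r}^k_{\mathcal S}\|_2$ and $\|\boldsymbol{r}^*\|_2=\min_{k\neq\hat k}\|\boldsymbol{r}^k\|_2$. A random $m$-dimensional subspace of $\mathbb{R}^d$ is the span of $m$ independent vectors drawn uniformly from the unit sphere $\mathbb{S}^{d-1}$. For $m\ge1$ and $\delta\in(0,1)$, $\zeta_2(m,\delta)=\Big(\max\big(\tfrac1e\delta^{2/m},\,1-\sqrt{2(1-\delta^{2/m})}\big)\Big)^{-1}$. *)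

From HB Require Import structures.
From mathcomp Require Import all_boot all_order all_algebra.
From mathcomp Require Import all_classical all_reals all_analysis measurable_realfun.
Set Implicit Arguments. Unset Strict Implicit. Unset Printing Implicit Defensive.
Import Order.TTheory GRing.Theory Num.Theory numFieldNormedType.Exports.
Local Open Scope classical_set_scope.
Local Open Scope ring_scope.

Definition norm2 {R : realType} {d : nat} (x : 'rV[R]_d) : R :=
  Num.sqrt (\sum_(i < d) x 0 i ^+ 2).

(* || r^k_S ||_2 = inf { ||r||_2 : r in S, f_k(x0+r) >= f_khat(x0+r) }, in \bar R
   (inf of the empty set is +oo). *)
Definition rnorm_sub {R : realType} {d L : nat} (f : 'rV[R]_d -> 'I_L -> R)
  (x0 : 'rV[R]_d) (khat k : 'I_L) (S : set 'rV[R]_d) : \bar R :=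
  ereal_inf [set (norm2 r)%:E | r in [set r | S r /\ f (x0 + r) khat <= f (x0 + r) k]].

Definition rnorm {R : realType} {d L : nat} (f : 'rV[R]_d -> 'I_L -> R)
  (x0 : 'rV[R]_d) (khat k : 'I_L) : \bar R := rnorm_sub f x0 khat k setT.

Definition rstar_sub {R : realType} {d L : nat} (f : 'rV[R]_d -> 'I_L -> R)
  (x0 : 'rV[R]_d) (khat : 'I_L) (S : set 'rV[R]_d) : \bar R :=
  ereal_inf [set rnorm_sub f x0 khat k S | k in [set k | k != khat]].

Definition rstar {R : realType} {d L : nat} (f : 'rV[R]_d -> 'I_L -> R)
  (x0 : 'rV[R]_d) (khat : 'I_L) : \bar R := rstar_sub f x0 khat setT.

Definition zeta2 {R : realType} (m : nat) (delta : R) : R :=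
  (Num.max (expR (-1) * delta `^ (2 / m%:R))
           (1 - Num.sqrt (2 * (1 - delta `^ (2 / m%:R)))))^-1.

Definition borelV {R : realType} {d : nat} (B : set 'rV[R]_d) : Prop :=
  <<s [set U : set 'rV[R]_d | open U] >> B.

Definition unit_sphere {R : realType} {d : nat} : set 'rV[R]_d :=
  [set x | norm2 x = 1].

Definition span_of {R : realType} {d m : nat} (v : 'I_m -> 'rV[R]_d) : set 'rV[R]_d :=
  [set r | (r <= \matrix_(i < m) v i)%MS].

(* v_0, ..., v_{m-1} : T -> R^d are independent random vectors, each uniformly
   distributed on the unit sphere S^{d-1} (the uniform distribution being the
   unique rotation-invariant probability measure carried by the sphere). *)
Definition iid_uniform_sphere {R : realType} {dT : measure_display}
  {T : measurableType dT} (P : probability T R) {d m : nat}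
  (v : 'I_m -> T -> 'rV[R]_d) : Prop :=
  [/\ (forall i B, borelV B -> measurable (v i @^-1` B)),
      (forall B : 'I_m -> set 'rV[R]_d, (forall i, borelV (B i)) ->
         P (\bigcap_(i in [set: 'I_m]) (v i @^-1` B i)) =
         (\prod_(i < m) P (v i @^-1` B i))%E),
      (forall i, P (v i @^-1` unit_sphere) = 1%E) &
      (forall i (Q : 'M[R]_d) B, Q *m Q^T = 1%:M -> borelV B ->
         P ((fun w => v i w *m Q) @^-1` B) = P (v i @^-1` B))].

From HB Require Import structures.
From mathcomp Require Import all_boot all_order all_algebra.
From mathcomp Require Import all_classical all_reals all_analysis measurable_realfun.
From mathcomp Require Import lra.
Import Order.TTheory GRing.Theory Num.Theory numFieldNormedType.Exports.
Local Open Scope classical_set_scope.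
Local Open Scope ring_scope.

(* Call a class [k] relevant when [k != khat] and [||r^k|| < thr], where [thr] is the
   threshold defining [A].  Off the bad events ("the ratio of some relevant [k] leaves
   [l, u]" and "[||r^p_S|| >= thr]"), the minimum [||r^*_S||] is pinched: an irrelevant
   class has [||r^k_S|| >= ||r^k|| >= thr > ||r^p_S||], a relevant one has
   [||r^k_S|| >= l ||r^k|| >= l ||r^*||], and [p] gives [||r^*_S|| <= u ||r^*||].  A
   union bound over at most [L] relevant classes and the event for [p] concludes; the
   distribution of [S] and the value of the constant in [thr] play no role. *)

Lemma ediv_band {R : realType} (x : \bar R) (y l u : R) : 0 < y ->
  (l%:E <= x / y%:E <= u%:E)%E = ((l * y)%:E <= x <= (u * y)%:E)%E.
Proof.
by move=> y0; rewrite inver gt_eqF // lee_pdivlMr // lee_pdivrMr // !EFinM.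
Qed.

Lemma ge0_lt_fineK {R : realDomainType} {x y : \bar R} :
  (0 <= x)%E -> (x < y)%E -> x = (fine x)%:E.
Proof. by move=> x0 xy; rewrite fineK // ge0_fin_numE // (lt_le_trans xy (leey _)). Qed.

Section minimal_perturbation.
Context {R : realType} {d L : nat} (f : 'rV[R]_d -> 'I_L -> R) (x0 : 'rV[R]_d) (khat : 'I_L).
Local Notation rnorm_sub := (rnorm_sub f x0 khat).
Local Notation rnorm := (rnorm f x0 khat).
Local Notation rstar_sub := (rstar_sub f x0 khat).
Local Notation rstar := (rstar f x0 khat).

Lemma rnorm_sub_ge0 k S : (0 <= rnorm_sub k S)%E.
Proof. by apply/ereal_infP => _ [r _ <-]; rewrite lee_fin sqrtr_ge0. Qed.

Lemma rnorm_ge0 k : (0 <= rnorm k)%E.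
Proof. exact: rnorm_sub_ge0. Qed.

Lemma rnorm_le_sub k S : (rnorm k <= rnorm_sub k S)%E.
Proof.
by apply/ereal_infP => _ [r [_ fr] <-]; apply: ereal_inf_lbound; exists r.
Qed.

Lemma rstar_sub_ge0 S : (0 <= rstar_sub S)%E.
Proof. by apply/ereal_infP => _ [k _ <-]; exact: rnorm_sub_ge0. Qed.

Lemma rstar_sub_le S {k} : k != khat -> (rstar_sub S <= rnorm_sub k S)%E.
Proof. by move=> kk; apply: ereal_inf_lbound; exists k. Qed.

Lemma rstar_sub_bigmin S :
  rstar_sub S = \big[Order.min/+oo%E]_(k | k != khat) rnorm_sub k S.
Proof.
apply/eqP; rewrite eq_le; apply/andP; split.
  by apply: le_bigmin => [|k kk]; [exact: leey | exact: rstar_sub_le].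
by apply/ereal_infP => _ [k kk <-]; exact: bigmin_le_cond.
Qed.

(* Classes with [thr <= rnorm k] cannot realise the minimum [rstar_sub S], since
   [rnorm_sub k S >= thr > rnorm_sub p S]. *)
Lemma rstar_sub_ratio_band {S p} {thr : \bar R} {l u : R} :
  0 <= l -> p != khat -> rnorm p = rstar -> (0 < rstar)%E ->
  (rnorm_sub p S < thr)%E ->
  (forall k, k != khat -> (rnorm k < thr)%E ->
     (l%:E <= rnorm_sub k S / rnorm k <= u%:E)%E) ->
  (l%:E <= rstar_sub S / rstar <= u%:E)%E.
Proof.
move=> l0 pk rpE rs0 bp_thr band.
have ap_thr : (rnorm p < thr)%E := le_lt_trans (rnorm_le_sub p S) bp_thr.
have := ge0_lt_fineK (rnorm_ge0 p) ap_thr; rewrite rpE => rE.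
set r := fine rstar in rE; have r0 : 0 < r by rewrite -lte_fin -rE.
have := band p pk ap_thr; rewrite rpE rE !ediv_band // => /andP[lbp ubp].
apply/andP; split; last exact: le_trans (rstar_sub_le S pk) ubp.
apply/ereal_infP => _ [k kk <-].
have [ak_thr | thr_ak] := ltP (rnorm k) thr.
  have akE := ge0_lt_fineK (rnorm_ge0 k) ak_thr.
  have rak : r <= fine (rnorm k) by rewrite -lee_fin -akE -rE; exact: rstar_sub_le.
  have := band k kk ak_thr; rewrite akE ediv_band ?(lt_le_trans r0) // => /andP[lbk _].
  by apply: le_trans lbk; rewrite lee_fin ler_wpM2l.
apply: le_trans lbp _; apply: (le_trans (ltW bp_thr)).
exact: le_trans thr_ak (rnorm_le_sub k S).
Qed.

End minimal_perturbation.

Section measurability.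
Context {R : realType} {dT : measure_display} {T : measurableType dT}.

Lemma measurable_fun_bigmin {I : Type} (s : seq I) (Q : pred I) (X : I -> T -> \bar R) :
  (forall k, Q k -> measurable_fun [set: T] (X k)) ->
  measurable_fun [set: T] (fun w => \big[Order.min/+oo%E]_(k <- s | Q k) X k w).
Proof.
move=> mX; elim: s => [|k s IH].
  by under eq_fun do rewrite big_nil; exact: measurable_cst.
under eq_fun do rewrite big_cons.
by case Qk: (Q k) => //; exact: measurable_mine (mX k Qk) IH.
Qed.

Lemma measurable_lee_fun {g : T -> \bar R} (a : \bar R) :
  measurable_fun [set: T] g -> measurable [set w | (a <= g w)%E].
Proof.
move=> mg; rewrite (_ : [set w | _] = g @^-1` [set` `[a, +oo[%R]).
  by rewrite -[X in measurable X]setTI; exact: mg measurableT _ (emeasurable_itv _).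
by apply/seteqP; split => w /=; rewrite in_itv /= andbT.
Qed.

Lemma measurable_ratio_band {g : T -> \bar R} (c : \bar R) (a b : R) :
  measurable_fun [set: T] g -> measurable [set w | (a%:E <= g w * c <= b%:E)%E].
Proof.
move=> mg; have mgc := measurable_funeM c mg.
rewrite (_ : [set w | _] = (fun w => c * g w)%E @^-1` [set` `[a%:E, b%:E]%R]).
  by rewrite -[X in measurable X]setTI; exact: mgc measurableT _ (emeasurable_itv _).
by apply/seteqP; split => w /=; rewrite in_itv /= muleC.
Qed.

Lemma measurable_rstar_sub {d L : nat} (f : 'rV[R]_d -> 'I_L -> R) (x0 : 'rV[R]_d)
    (khat : 'I_L) (S : T -> set 'rV[R]_d) :
  (forall k, k != khat -> measurable_fun [set: T] (fun w => rnorm_sub f x0 khat k (S w))) ->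
  measurable_fun [set: T] (fun w => rstar_sub f x0 khat (S w)).
Proof.
by move=> mS; under eq_fun do rewrite rstar_sub_bigmin; exact: measurable_fun_bigmin.
Qed.

End measurability.

Section probability_bounds.
Context {R : realType} {dT : measure_display} {T : measurableType dT}.
Variable P : probability T R.

Lemma measure_bigsetU_le {I : Type} (s : seq I) (Q : pred I) (B : I -> set T) :
  (forall k, Q k -> measurable (B k)) ->
  (P (\big[setU/set0]_(k <- s | Q k) B k) <= \sum_(k <- s | Q k) P (B k))%E.
Proof.
move=> mB; apply: (@proj2 (measurable (\big[setU/set0]_(k <- s | Q k) B k))).
elim/big_rec2: _ => [|k U e Qk [mU PU]]; first by rewrite measure0.
split; first exact: measurableU (mB k Qk) mU.
by apply: le_trans (measureU2 _ (mB k Qk) mU) _; exact: leeD.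
Qed.

Lemma probability_fineK {A} : measurable A -> P A = (fine (P A))%:E.
Proof.
move=> mA; rewrite fineK // ge0_fin_numE //.
exact: le_lt_trans (probability_le1 P mA) (ltry _).
Qed.

Lemma probability_setC_le (e : R) {A} :
  measurable A -> ((1 - e)%:E <= P A)%E -> (P (~` A) <= e%:E)%E.
Proof.
move=> mA; rewrite probability_setC // (probability_fineK mA).
by rewrite -EFinB !lee_fin; lra.
Qed.

Lemma probability_ge_of_setC (e : R) {A E} : measurable A -> measurable E ->
  ~` A `<=` E -> (P A <= e%:E)%E -> ((1 - e)%:E <= P E)%E.
Proof.
move=> mA mE AE PA.
have PAC : ((1 - e)%:E <= P (~` A))%E.
  by rewrite probability_setC // (probability_fineK mA) -EFinB lee_fin;
    move: PA; rewrite (probability_fineK mA) lee_fin; lra.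
by apply: le_trans PAC (le_measure P _ _ AE); rewrite inE //; exact: measurableC.
Qed.

Lemma probability_ge_union_bound {I : finType} (K : {pred I}) (E : I -> set T)
    {B G : set T} {e s : R} :
  (forall k, k \in K -> measurable (E k)) -> measurable B -> measurable G ->
  (forall k, k \in K -> ((1 - e)%:E <= P (E k))%E) -> (P B <= s%:E)%E ->
  (forall w, ~ B w -> (forall k, k \in K -> E k w) -> G w) ->
  ((1 - (e *+ #|K| + s))%:E <= P G)%E.
Proof.
move=> mE mB mG PE PB EG.
pose bad := \big[setU/set0]_(k in K) ~` E k.
have mbad : measurable bad by apply: bigsetU_measurable => k Kk; exact/measurableC/mE.
apply: (probability_ge_of_setC _ (measurableU _ _ mbad mB) mG).
  move=> w /not_orP[nbad nB]; apply: EG nB _ => k Kk.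
  by apply/not_notP => nE; apply: nbad; rewrite /bad (bigD1 k) //=; left.
apply: le_trans (measureU2 _ mbad mB) _; rewrite EFinD leeD //.
apply: le_trans (measure_bigsetU_le _ _ _ (fun k Kk => measurableC (mE k Kk))) _.
rewrite -sumr_const -sumEFin; apply: lee_sum => k Kk.
exact: probability_setC_le (mE k Kk) (PE k Kk).
Qed.

End probability_bounds.

Theorem lemma5 (R : realType) (dT : measure_display) (T : measurableType dT)
  (P : probability T R) (d m L : nat) (delta l u t : R)
  (f : 'rV[R]_d -> 'I_L -> R) (x0 : 'rV[R]_d) (khat p : 'I_L)
  (v : 'I_m -> T -> 'rV[R]_d) :
  (2 <= d)%N -> (1 <= m)%N -> (m < d)%N -> 0 < delta < 1 ->
  (forall k, f x0 k <= f x0 khat) ->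
  (rstar f x0 khat < +oo)%E ->
  iid_uniform_sphere P v ->
  (forall k, k != khat ->
     measurable_fun [set: T] ((fun w => rnorm_sub f x0 khat k (span_of (fun i => v i w))) : T -> \bar R)) ->
  0 <= l -> l <= u -> 0 <= t ->
  p != khat -> rnorm f x0 khat p = rstar f x0 khat ->
  let thr := ((145 / 100 * Num.sqrt (zeta2 m delta) * Num.sqrt (d%:R / m%:R))%:E
              * rstar f x0 khat)%E in
  let A := [set k | k != khat /\ (thr <= rnorm f x0 khat k)%E] in
  (forall k, k != khat -> ~ A k ->
     (P [set w | l%:E <= rnorm_sub f x0 khat k (span_of (fun i => v i w))
                          / rnorm f x0 khat k <= u%:E]
      >= (1 - delta)%:E)%E) ->
  (P [set w | thr <= rnorm_sub f x0 khat p (span_of (fun i => v i w))] <= t%:E)%E ->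
  (P [set w | l%:E <= rstar_sub f x0 khat (span_of (fun i => v i w))
                        / rstar f x0 khat <= u%:E]
   >= (1 - (L%:R + 1) * delta - t)%:E)%E.
Proof.
move=> _ _ _ /andP[delta0 _] _ _ _ mrnorm_sub l0 _ _ pk rpE thr A Pband Ptail.
have mE := measurable_ratio_band ((rstar f x0 khat)^-1)%E l u
  (measurable_rstar_sub _ _ _ _ mrnorm_sub).
have mBp := measurable_lee_fun thr (mrnorm_sub p pk).
have [Ap | nAp] := leP thr (rnorm f x0 khat p).
  (* [p \in A] makes the event bounded by [t] certain, so the bound is vacuous. *)
  have t1 : 1 <= t.
    rewrite -lee_fin -(probability_setT P); apply: le_trans Ptail.
    by apply: le_measure; rewrite ?inE // => w _; exact: le_trans Ap (rnorm_le_sub _ _ _ _ _).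
  apply: le_trans (measure_ge0 P _); rewrite lee_fin.
  have : 0 <= (L%:R + 1) * delta by rewrite mulr_ge0 ?ltW // addr_ge0.
  lra.
have rs0 : (0 < rstar f x0 khat)%E.
  rewrite lt0e rstar_sub_ge0 andbT; apply/eqP => rs_eq0.
  by move: nAp; rewrite rpE /thr rs_eq0 mule0 ltxx.
pose K := [pred k | (k != khat) && (rnorm f x0 khat k < thr)%E].
pose E k := [set w | (l%:E <= rnorm_sub f x0 khat k (span_of (fun i => v i w))
                                / rnorm f x0 khat k <= u%:E)%E].
apply: le_trans (probability_ge_union_bound P K E (e := delta) _ mBp mE _ Ptail _).
- have KL : #|K|%:R * delta <= L%:R * delta.
    by apply: ler_wpM2r; [exact: ltW | rewrite ler_nat -[leqRHS]card_ord max_card].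
  by rewrite lee_fin -mulr_natl; lra.
- by move=> k /andP[kk _]; exact: measurable_ratio_band _ _ _ (mrnorm_sub k kk).
- by move=> k /andP[kk ak]; apply: Pband => // -[_]; rewrite leNgt ak.
move=> w nBp relevant_band.
apply: (rstar_sub_ratio_band _ _ _ (thr := thr) l0 pk rpE rs0) => [|k kk ak].
  by rewrite ltNge; apply/negP.
by apply: relevant_band; rewrite inE kk ak.
Qed.
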